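(* Let $k\ge 3$. A graph $G$ is $k$-chromatic and double-edge-critical if and only if $G$ is the complete graph $K_k$.
   Context: All graphs are finite and simple. A graph $G$ is (vertex-)critical if $\chi(G-v)<\chi(G)$ for every vertex $v$. A vertex-critical graph $G$ is double-edge-critical if $\chi(G-e_1-e_2)\le\chi(G)-2$ for any two non-incident edges $e_1,e_2\in E(G)$. *)

(* A finite simple graph is a symmetric irreflexive
   relation e : rel T on a finType T. *)
From mathcomp Require Import all_boot.
Set Implicit Arguments. Unset Strict Implicit. Unset Printing Implicit Defensive.

Section Graphs.
Variable T : finType.

(* Colours are taken in 'I_#|T| (w.l.o.g.,
   since at most #|T| colours are ever needed), which makes this decidable. *)
Definition colorable (e : rel T) (A : {set T}) (k : nat) : bool :=
  [exists f : {ffun T -> 'I_#|T|},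
     [forall x in A, f x < k] &&
     [forall x in A, forall y in A, ((x != y) && e x y) ==> (f x != f y)]].

Lemma colorable_card (e : rel T) (A : {set T}) : colorable e A #|T|.
Proof.
apply/existsP; exists [ffun x => enum_rank x]; apply/andP; split.
  by apply/forallP => x; apply/implyP => _; rewrite ffunE ltn_ord.
apply/forallP => x; apply/implyP => _; apply/forallP => y; apply/implyP => _.
apply/implyP => /andP [nxy _]; rewrite !ffunE.
by apply: contra nxy => /eqP /enum_rank_inj ->.
Qed.

Lemma ex_colorable (e : rel T) (A : {set T}) : exists k, colorable e A k.
Proof. by exists #|T|; apply: colorable_card. Qed.

Definition chi (e : rel T) (A : {set T}) : nat := ex_minn (ex_colorable e A).

Definition chromatic_number (e : rel T) : nat := chi e setT.

Definition vertex_critical (e : rel T) : Prop :=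
  forall v : T, chi e (setT :\ v) < chromatic_number e.

Definition remove_two_edges (e : rel T) (a b c d : T) : rel T :=
  fun x y => [&& e x y, [set x; y] != [set a; b] & [set x; y] != [set c; d]].

Definition nonincident_edges (e : rel T) (a b c d : T) : Prop :=
  [/\ e a b, e c d & [/\ a != c, a != d, b != c & b != d]].

Definition double_edge_critical (e : rel T) : Prop :=
  vertex_critical e /\
  forall a b c d : T, nonincident_edges e a b c d ->
    chromatic_number (remove_two_edges e a b c d) <= chromatic_number e - 2.

Definition is_complete_graph (e : rel T) (k : nat) : Prop :=
  #|T| = k /\ forall x y : T, x != y -> e x y.

End Graphs.

(* If ab and cd are non-incident edges of a double-edge-critical graph G with
   a, c non-adjacent, a (chi G - 2)-colouring of G - ab - cd extended by one
   fresh colour on {a, c} would colour G with chi G - 1 colours; hence a ~ c.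
   Vertex-criticality (with chi G >= 3) gives every vertex a neighbour other
   than any prescribed vertex, so two non-adjacent vertices x, y would have
   neighbours a of x and b of y making xa, yb non-incident: G is complete.
   Conversely, in K_k one may colour b like a and d like c. *)
From mathcomp Require Import all_boot zify.
Set Implicit Arguments. Unset Strict Implicit. Unset Printing Implicit Defensive.

Section Colorings.
Variables (T : finType) (e : rel T).

Definition proper_coloring (A : {set T}) (k : nat) (f : T -> nat) :=
  (forall x, x \in A -> f x < k) /\
  (forall x y, x \in A -> y \in A -> x != y -> e x y -> f x != f y).

Lemma colorable_mono (A : {set T}) m n :
  colorable e A m -> m <= n -> colorable e A n.
Proof.
case/existsP => f /andP [/forall_inP f_lt f_ok] le_mn.
apply/existsP; exists f; rewrite f_ok andbT.
by apply/forall_inP => x /f_lt /leq_trans; apply.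
Qed.

Lemma colorableP (A : {set T}) k :
  colorable e A k <-> exists f, proper_coloring A k f.
Proof.
split.
  case/existsP => f /andP [/forall_inP f_lt /forall_inP f_ok].
  exists (fun x => val (f x)); split=> [x /f_lt //|x y xA yA nxy exy].
  by move: (f_ok x xA) => /forall_inP /(_ y yA) /implyP; apply; rewrite nxy.
case=> f [f_lt f_ok]; have [le_Tk|lt_kT] := leqP #|T| k.
  exact: colorable_mono (colorable_card e A) le_Tk.
(* colours are stored in 'I_#|T|; [insubd] is the identity below k < #|T| *)
have T_gt0 : 0 < #|T| by lia.
have valE x : x \in A -> val (insubd (Ordinal T_gt0) (f x) : 'I_#|T|) = f x.
  by move=> xA; rewrite val_insubd (ltn_trans (f_lt x xA) lt_kT).
apply/existsP; exists [ffun x => insubd (Ordinal T_gt0) (f x)].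
apply/andP; split; apply/forall_inP => x xA; rewrite ffunE.
  by rewrite valE ?f_lt.
apply/forall_inP => y yA; apply/implyP => /andP [nxy exy]; rewrite ffunE.
by rewrite -(inj_eq val_inj) !valE ?f_ok.
Qed.

Lemma chi_colorable (A : {set T}) : colorable e A (chi e A).
Proof. by rewrite /chi; case: ex_minnP. Qed.

Lemma chi_le (A : {set T}) m : colorable e A m -> chi e A <= m.
Proof. by rewrite /chi; case: ex_minnP => n _; apply. Qed.

Lemma colorable_map (A S : {set T}) (s : T -> T) :
  {in A, forall x, s x \in S} ->
  (forall x y, x \in A -> y \in A -> x != y -> e x y -> s x != s y) ->
  colorable e A #|S|.
Proof.
move=> sAS s_ok; apply/colorableP.
exists (fun x => index (s x) (enum S)); split=> [x xA|x y xA yA nxy exy].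
  by rewrite cardE index_mem mem_enum sAS.
apply: contra (s_ok x y xA yA nxy exy) => /eqP eq_idx.
have mem_s z : z \in A -> s z \in enum S by rewrite mem_enum => /sAS.
by rewrite -(nth_index (s x) (mem_s x xA)) eq_idx nth_index ?mem_s.
Qed.

Lemma chi_clique (A : {set T}) :
  {in A &, forall x y, x != y -> e x y} -> chi e A = #|A|.
Proof.
move=> clA; apply/eqP; rewrite eqn_leq chi_le /=; last first.
  by apply: (colorable_map (s := id)) => // x y xA yA nxy _.
have /colorableP [f [f_lt f_ok]] := chi_colorable A.
have f_inj : {in A &, injective f}.
  move=> x y xA yA fxy; apply/eqP; apply: contraT => nxy.
  by have := f_ok x y xA yA nxy (clA x y xA yA nxy); rewrite fxy eqxx.
rewrite cardE -(size_map f) -(size_iota 0 (chi e A)).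
apply: uniq_leq_size => [|_ /mapP [x xA ->]].
  rewrite map_inj_in_uniq ?enum_uniq // => x y.
  by rewrite !mem_enum; apply: f_inj.
by rewrite mem_enum in xA; rewrite mem_iota add0n f_lt.
Qed.

End Colorings.

Section DoubleEdgeCritical.
Variables (T : finType) (e : rel T).
Hypothesis e_sym : symmetric e.

Lemma critical_neighbour_avoiding (v u : T) :
  vertex_critical e -> 3 <= chromatic_number e -> exists2 w, e v w & w != u.
Proof.
move=> crit chi_ge3.
have [w /andP [evw nwu]|nbr_v] := pickP (fun w => e v w && (w != u)).
  by exists w.
exfalso.
have /colorableP [f [f_lt f_ok]] := chi_colorable e (setT :\ v).
have {}f_lt x : x != v -> f x < chromatic_number e - 1.
  move=> nxv; have := f_lt x; rewrite !inE nxv => /(_ isT).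
  by have := crit v; lia.
(* u is the only neighbour of v, and the colours 0, 1 are both available *)
pose g x := if x == v then (if f u == 0 then 1 else 0) else f x.
suff /chi_le : colorable e setT (chromatic_number e - 1).
  by rewrite -/(chromatic_number e); lia.
apply/colorableP; exists g; split=> [x _|x y _ _ nxy exy]; rewrite /g.
  by case: eqP => [_|/eqP /f_lt]; [case: eqP; lia | lia].
have nbr_u z : e v z -> z = u.
  by move=> evz; apply/eqP; move: (nbr_v z); rewrite evz => /negbFE.
case: (x =P v) => [xv|/eqP nxv]; case: (y =P v) => [yv|/eqP nyv].
- by rewrite xv yv eqxx in nxy.
- move: exy; rewrite xv => /nbr_u yu; rewrite yu.
  by case: (f u =P 0) => [->|/eqP]; rewrite // eq_sym.
- move: exy; rewrite yv e_sym => /nbr_u xu; rewrite xu.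
  by case: (f u =P 0) => [->|/eqP].
- by apply: f_ok; rewrite ?inE ?nxv ?nyv.
Qed.

Lemma chi_le_remove_two_edges (a b c d : T) :
  ~~ e a c ->
  chromatic_number e <= (chromatic_number (remove_two_edges e a b c d)).+1.
Proof.
move=> nac; rewrite /chromatic_number.
move: (chi _ _) (chi_colorable (remove_two_edges e a b c d) setT).
move=> m /colorableP [f [f_lt f_ok]].
(* a and c are not adjacent, so they may share the fresh colour m *)
pose g x := if (x == a) || (x == c) then m else f x.
apply: chi_le; apply/colorableP; exists g; split=> [x _|x y _ _ nxy exy].
  by rewrite /g; case: ifP => // _; apply: ltnW; apply: f_lt.
rewrite /g; case: ifPn => [acx|]; case: ifPn => [acy|] //.
- case/orP: acx acy exy nxy => /eqP-> /orP[]/eqP-> exy; rewrite ?eqxx // => _.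
    by rewrite exy in nac.
  by rewrite e_sym exy in nac.
- by move=> _; rewrite neq_ltn f_lt ?orbT.
- by move=> _; rewrite neq_ltn f_lt.
rewrite !negb_or => /andP [nya nyc] /andP [nxa nxc]; apply: f_ok => //.
rewrite /remove_two_edges exy /=; apply/andP; split; apply/negP => /eqP xy_eq.
  move: (set21 a b); rewrite -xy_eq !inE !(eq_sym a).
  by rewrite (negbTE nxa) (negbTE nya).
move: (set21 c d); rewrite -xy_eq !inE !(eq_sym c).
by rewrite (negbTE nxc) (negbTE nyc).
Qed.

Lemma nonincident_edges_adjacent (a b c d : T) :
  double_edge_critical e -> 2 <= chromatic_number e ->
  nonincident_edges e a b c d -> e a c.
Proof.
move=> [_ dec] chi_ge2 abcd; apply: contraT => nac.
by have := chi_le_remove_two_edges b d nac; have := dec _ _ _ _ abcd; lia.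
Qed.

Lemma double_edge_critical_complete :
  double_edge_critical e -> 3 <= chromatic_number e ->
  forall x y, x != y -> e x y.
Proof.
move=> dec chi_ge3 x y nxy; apply: contraT => nexy.
have [b eyb nbx] := critical_neighbour_avoiding y x dec.1 chi_ge3.
have [a exa nab] := critical_neighbour_avoiding x b dec.1 chi_ge3.
have nay : a != y by apply: contraNneq nexy => <-.
rewrite -(negbTE nexy).
apply: (nonincident_edges_adjacent (b := a) (d := b)) => //; first exact: ltnW.
by split=> //; split; rewrite // eq_sym.
Qed.

End DoubleEdgeCritical.

Section CompleteGraphs.
Variables (T : finType) (e : rel T).
Hypotheses (e_irr : irreflexive e) (e_complete : forall x y, x != y -> e x y).

Lemma chromatic_number_complete : chromatic_number e = #|T|.
Proof.
rewrite /chromatic_number chi_clique ?cardsT //.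
by move=> x y _ _; apply: e_complete.
Qed.

Lemma complete_vertex_critical : 0 < #|T| -> vertex_critical e.
Proof.
move=> T_gt0 v; rewrite chromatic_number_complete chi_clique.
  by have := cardsD1 v [set: T]; rewrite in_setT cardsT; lia.
by move=> x y _ _; apply: e_complete.
Qed.

Definition contract_pairs (a b c d z : T) : T :=
  if z == b then a else if z == d then c else z.

Lemma eq_contract_pairs (a b c d x y : T) :
  a != b -> a != c -> a != d -> c != b -> c != d -> b != d -> x != y ->
  contract_pairs a b c d x = contract_pairs a b c d y ->
  [set x; y] = [set a; b] \/ [set x; y] = [set c; d].
Proof.
move=> nab nac nad ncb ncd nbd nxy; rewrite /contract_pairs.
case: (x =P b) => [xb|nxb]; case: (x =P d) => [xd|nxd];
case: (y =P b) => [yb|nyb]; case: (y =P d) => [yd|nyd] => E; subst;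
  rewrite ?eqxx in nab nac nad ncb ncd nbd nxy => //;
  by [left; rewrite setUC | right; rewrite setUC | left | right].
Qed.

Lemma complete_remove_two_edges (a b c d : T) :
  nonincident_edges e a b c d ->
  chromatic_number (remove_two_edges e a b c d) <= #|T| - 2.
Proof.
move=> [eab ecd [nac nad nbc nbd]].
have nab : a != b by apply: contraTneq eab => ->; rewrite e_irr.
have ncd : c != d by apply: contraTneq ecd => ->; rewrite e_irr.
have ncb : c != b by rewrite eq_sym.
have card_S : #|[set: T] :\ b :\ d| = #|T| - 2.
  have := cardsD1 b [set: T]; have := cardsD1 d ([set: T] :\ b).
  by rewrite in_setT cardsT !inE eq_sym nbd /=; lia.
rewrite -card_S; apply/chi_le/(colorable_map (s := contract_pairs a b c d)).
  move=> x _; rewrite !inE /contract_pairs.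
  case: (x =P b) => [_|/eqP nxb]; first by rewrite nad nab.
  case: (x =P d) => [_|/eqP nxd]; first by rewrite ncd ncb.
  by rewrite nxd nxb.
move=> x y _ _ nxy /and3P [_ nxy_ab nxy_cd]; apply/eqP.
move/(eq_contract_pairs nab nac nad ncb ncd nbd nxy) => [] xy_eq.
  by rewrite xy_eq eqxx in nxy_ab.
by rewrite xy_eq eqxx in nxy_cd.
Qed.

End CompleteGraphs.

Theorem theorem33 (T : finType) (e : rel T) (k : nat) :
  symmetric e -> irreflexive e -> 3 <= k ->
  (chromatic_number e = k /\ double_edge_critical e) <-> is_complete_graph e k.
Proof.
move=> e_sym e_irr k_ge3; split=> [[chi_k dec]|[card_k e_complete]].
  have e_complete : forall x y, x != y -> e x y.
    by apply: double_edge_critical_complete; rewrite ?chi_k.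
  by split=> //; rewrite -chi_k chromatic_number_complete.
have chi_k : chromatic_number e = k by rewrite chromatic_number_complete.
split=> //; split=> [|a b c d abcd].
  by apply: complete_vertex_critical e_complete _; lia.
by rewrite chi_k -card_k complete_remove_two_edges.
Qed.
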